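(* Let $k/\mathbb{Q}$ be a finite extension and $\Lambda$ a finitely generated subgroup of $\mathrm{GL}(n;k)$, and let $\Gamma$ be a unipotent subgroup of $\Lambda$. Then there exists a torsion-free finite index subgroup $\Lambda_0$ of $\Lambda$ with $\Gamma\subseteq\Lambda_0$.
   Context: A subgroup is unipotent if it is conjugate in $\mathrm{GL}(n;\mathbb{C})$ into the group of upper triangular matrices with all diagonal entries equal to 1. *)

From HB Require Import structures.
From mathcomp Require Import all_boot all_order all_algebra.
From mathcomp Require Import complex reals.
Set Implicit Arguments. Unset Strict Implicit. Unset Printing Implicit Defensive.
Import Order.TTheory GRing.Theory Num.Theory.
Local Open Scope ring_scope.

(* k is a finite extension of Q: k is finite-dimensional as a Q-vector space,
   i.e. spanned over Q (acting through ratr) by finitely many elements. *)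
Definition finite_over_Q (k : fieldType) : Prop :=
  exists (d : nat) (b : 'I_d -> k),
    forall x : k, exists c : 'I_d -> rat, x = \sum_(i < d) ratr (c i) * b i.

Definition GL_subgroup (F : fieldType) (n : nat) (G : 'M[F]_n -> Prop) : Prop :=
  [/\ G 1%:M,
      (forall g, G g -> g \in unitmx),
      (forall g h, G g -> G h -> G (g *m h)) &
      (forall g, G g -> G (invmx g))].

Definition GL_subset (F : fieldType) (n : nat) (A B : 'M[F]_n -> Prop) : Prop :=
  forall g, A g -> B g.

Definition GL_generated (F : fieldType) (n : nat) (s : seq 'M[F]_n)
  (g : 'M[F]_n) : Prop :=
  forall H : 'M[F]_n -> Prop, GL_subgroup H -> (forall x, x \in s -> H x) -> H g.

Definition GL_fingen (F : fieldType) (n : nat) (G : 'M[F]_n -> Prop) : Prop :=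
  GL_subgroup G /\
  exists s : seq 'M[F]_n, all (fun x => x \in unitmx) s /\
    forall g, G g <-> GL_generated s g.

Definition mxpow (F : fieldType) (n : nat) (g : 'M[F]_n) (m : nat) : 'M[F]_n :=
  iter m (mulmx g) 1%:M.

Definition torsion_free (F : fieldType) (n : nat) (G : 'M[F]_n -> Prop) : Prop :=
  forall g m, G g -> (0 < m)%N -> mxpow g m = 1%:M -> g = 1%:M.

Definition finite_index (F : fieldType) (n : nat) (H G : 'M[F]_n -> Prop) : Prop :=
  exists s : seq 'M[F]_n, (forall x, x \in s -> G x) /\
    forall g, G g -> exists2 x, x \in s & H (invmx x *m g).

Definition upper_unitriangular (F : fieldType) (n : nat) (A : 'M[F]_n) : Prop :=
  forall i j : 'I_n, ((j < i)%N -> A i j = 0) /\ (i = j -> A i j = 1).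

(* G (a subgroup of GL(n;k), k embedded in C via f) is unipotent: conjugate in
   GL(n;C) into the upper unitriangular matrices *)
Definition unipotent_subgroup (k : fieldType) (C : fieldType)
  (f : {rmorphism k -> C}) (n : nat) (G : 'M[k]_n -> Prop) : Prop :=
  exists P : 'M[C]_n, P \in unitmx /\
    forall g, G g -> upper_unitriangular (P *m map_mx f g *m invmx P).

(* Fix a Q-basis b of k and two distinct primes p, q exceeding every denominator
   occurring in the structure constants of b and in the coordinates of the
   generators of Lambda and of their inverses.  Then Lambda consists of matrices
   over the ring of elements with p-integral coordinates (and likewise for q), so
   it can be reduced mod p and mod q.  Let Lambda0 be the set of g in Lambda that
   are congruent mod p and mod q to one and the same c in Gamma: it is a subgroup
   containing Gamma, of finite index because the reductions take finitely many
   values.  If g in Lambda0 has finite order and g = c (mod p) with c unipotent,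
   then g^(p^n) = c^(p^n) = 1 (mod p); and an element h = 1 + X = 1 (mod p) whose
   order is prime to p is trivial, because (1 + X)^m = 1 yields X = X V with
   V = 0 (mod p), so that every power of p divides X.  Hence g has p-power order,
   likewise q-power order, and g = 1. *)

From mathcomp Require Import all_boot all_order all_algebra.
From mathcomp Require Import complex reals zify ring.
From Stdlib Require Import Classical ClassicalEpsilon.
Set Implicit Arguments. Unset Strict Implicit. Unset Printing Implicit Defensive.
Import Order.TTheory GRing.Theory Num.Theory.
Local Open Scope ring_scope.

Section PIntegral.
Variable p : nat.
Hypothesis p_pr : prime p.

Definition p_integral (r : rat) := exists a b : int, ~~ (p %| b)%Z /\ r = a%:~R / b%:~R.

Let ndvd_intr_neq0 (b : int) : ~~ (p %| b)%Z -> (b%:~R : rat) != 0.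
Proof. by move=> Hb; rewrite intr_eq0; apply: contra Hb => /eqP ->; rewrite dvdz0. Qed.

Let ndvdzM (a b : int) : ~~ (p %| a)%Z -> ~~ (p %| b)%Z -> ~~ (p %| a * b)%Z.
Proof. by rewrite !dvdzE abszM /= Euclid_dvdM // negb_or => -> ->. Qed.

Let ndvdz1 : ~~ (p %| 1)%Z.
Proof. by rewrite dvdzE /= dvdn1; case: eqP p_pr => // ->. Qed.

Let denq_intr_neq0 r : (denq r)%:~R != 0 :> rat.
Proof. by rewrite intr_eq0 denq_neq0. Qed.

Lemma p_integral_int (z : int) : p_integral z%:~R.
Proof. by exists z, 1; split; [exact: ndvdz1 | rewrite divr1]. Qed.

Lemma p_integral_nat (m : nat) : p_integral m%:R.
Proof. by have := p_integral_int m; rewrite -pmulrn. Qed.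

Lemma p_integral0 : p_integral 0.
Proof. exact: p_integral_int 0. Qed.

Lemma p_integralD r s : p_integral r -> p_integral s -> p_integral (r + s).
Proof.
move=> [a [b [Hb ->]]] [c [d [Hd ->]]]; exists (a * d + c * b), (b * d).
split; first exact: ndvdzM.
have := ndvd_intr_neq0 Hb; have := ndvd_intr_neq0 Hd => d0 b0.
by rewrite rmorphD !rmorphM /=; field; apply/andP.
Qed.

Lemma p_integralM r s : p_integral r -> p_integral s -> p_integral (r * s).
Proof.
move=> [a [b [Hb ->]]] [c [d [Hd ->]]]; exists (a * c), (b * d).
split; first exact: ndvdzM.
have := ndvd_intr_neq0 Hb; have := ndvd_intr_neq0 Hd => d0 b0.
by rewrite !rmorphM /=; field; apply/andP.
Qed.

Lemma p_integralN r : p_integral r -> p_integral (- r).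
Proof. by rewrite -mulN1r; apply: p_integralM; apply: p_integral_int (-1). Qed.

Lemma p_integral_sum (I : Type) (r : seq I) (P : pred I) (F : I -> rat) :
  (forall i, P i -> p_integral (F i)) -> p_integral (\sum_(i <- r | P i) F i).
Proof. by move=> HF; apply: big_ind => //; [exact: p_integral0 | exact: p_integralD]. Qed.

Lemma p_integral_invn (m : nat) : ~~ (p %| m)%N -> p_integral (m%:R)^-1.
Proof. by move=> pm; exists 1, m; rewrite mul1r pmulrn. Qed.

Lemma p_integral_small_den r : (`|denq r| < p)%N -> p_integral r.
Proof.
move=> Hr; exists (numq r), (denq r); split; last by rewrite divq_num_den.
by rewrite dvdzE /= gtnNdvd // absz_gt0 denq_neq0.
Qed.

Lemma p_integral_denq r : p_integral r -> ~~ (p %| denq r)%Z.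
Proof.
move=> [a [b [Hb Hr]]]; apply/negP => Hd.
have Hn : ~~ (p %| numq r)%Z.
  apply/negP => Hn; have /eqP := coprime_num_den r.
  move: Hd Hn; rewrite !dvdzE /= => Hd Hn Hc.
  have : (p %| gcdn `|numq r| `|denq r|)%N by rewrite dvdn_gcd Hn Hd.
  by rewrite Hc dvdn1; case: eqP p_pr => // ->.
have E : numq r * b = a * denq r.
  apply: (@intr_inj rat); rewrite !rmorphM /=; apply/eqP.
  move/eqP: Hr; rewrite -{1}[r]divq_num_den.
  by rewrite eqr_div ?denq_intr_neq0 ?ndvd_intr_neq0.
have : (p %| numq r * b)%Z by rewrite E dvdz_mull.
by rewrite !dvdzE abszM Euclid_dvdM // -!dvdzE; apply/negP; rewrite negb_or Hn Hb.
Qed.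

Lemma prime_natr_neq0 : (p%:R : rat) != 0.
Proof. by rewrite pnatr_eq0; case: eqP p_pr => // ->. Qed.

Lemma p_integral_div_pexp_eq0 r : (forall t, p_integral (r / (p ^ t)%:R)) -> r = 0.
Proof.
move=> Hr; have [//|r0] := eqVneq r 0.
set t := `|numq r|%N.
have t0 : (0 < t)%N by rewrite absz_gt0 numq_eq0.
have [a [b [Hb E]]] := Hr t.
have pt0 : ((p ^ t)%:R : rat) != 0 by rewrite natrX expf_neq0 ?prime_natr_neq0.
have Er : numq r * b = a * (denq r * (p ^ t)%N).
  apply: (@intr_inj rat); rewrite !rmorphM /= -pmulrn; apply/eqP.
  move/eqP: E; rewrite -{1}[r]divq_num_den -mulrA -invfM.
  by rewrite eqr_div ?mulf_neq0 ?denq_intr_neq0 ?ndvd_intr_neq0.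
have : (p ^ t %| t * `|b|)%N by rewrite /t -abszM Er !abszM mulnA dvdn_mull.
rewrite Gauss_dvdl ?coprime_pexpl ?prime_coprime -?dvdzE // => /(dvdn_leq t0).
by rewrite leqNgt ltn_expl ?prime_gt1.
Qed.

Definition rat_mod (r : rat) : 'F_p := (numq r)%:~R / (denq r)%:~R.

Lemma rat_mod_eq_p_integral_div r s : p_integral r -> p_integral s ->
  rat_mod r = rat_mod s -> p_integral ((r - s) / p%:R).
Proof.
move=> /p_integral_denq Hr /p_integral_denq Hs Ers.
have chF := pchar_Fp p_pr.
have Fr : ((denq r)%:~R : 'F_p) != 0 by rewrite -(dvdz_pcharf chF).
have Fs : ((denq s)%:~R : 'F_p) != 0 by rewrite -(dvdz_pcharf chF).
set m := numq r * denq s - numq s * denq r.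
have pm : (p %| m)%Z.
  rewrite (dvdz_pcharf chF) /m rmorphB !rmorphM /= subr_eq0.
  by rewrite -eqr_div // -/(rat_mod r) Ers.
exists (m %/ p)%Z, (denq r * denq s); split; first exact: ndvdzM.
have r0 := denq_intr_neq0 r; have s0 := denq_intr_neq0 s.
rewrite -{1}(divq_num_den r) -{1}(divq_num_den s); apply: (mulIf prime_natr_neq0).
rewrite (divfK prime_natr_neq0) mulrAC -[p%:R]/((Posz p)%:~R : rat) -rmorphM divzK //.
by rewrite /m rmorphB !rmorphM /=; field; apply/andP.
Qed.
End PIntegral.

Lemma prime_dvdn_bin_pexp (q e j : nat) : prime q -> (0 < j < q ^ e)%N ->
  (q %| 'C(q ^ e, j))%N.
Proof.
move=> q_pr /andP [j0 jlt]; case: j j0 jlt => // j _ jlt.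
have cop : ~~ (q %| 'C(q ^ e, j.+1))%N -> coprime (q ^ e) 'C(q ^ e, j.+1).
  have e0 : (0 < e)%N by case: e jlt => //; rewrite expn0.
  by rewrite coprime_pexpl // prime_coprime.
apply: contraT => /cop qC.
have : (q ^ e %| j.+1 * 'C(q ^ e, j.+1))%N by rewrite -mul_bin_diag dvdn_mulr.
by rewrite Gauss_dvdl // gtnNdvd.
Qed.

Lemma expr_coprime_eq1 (R : pzRingType) (x : R) (a b : nat) : coprime a b ->
  x ^+ a = 1 -> x ^+ b = 1 -> x = 1.
Proof.
move=> ab xa xb; case: a => [|a] in ab xa *.
  by move: ab; rewrite /coprime gcd0n => /eqP b1; rewrite b1 expr1 in xb.
have [u _ /dvdnP [v Ev]] := Bezoutl b (ltn0Sn a).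
rewrite (eqP ab) in Ev.
have : x ^+ (1 + u * b) = 1 by rewrite Ev mulnC exprM xa expr1n.
by rewrite exprD expr1 mulnC exprM xb expr1n mulr1.
Qed.

Lemma binomial_expr_eq1 (R : pzRingType) (X : R) m : (X + 1) ^+ m.+1 = 1 ->
  X *+ m.+1 = - (X * (X * \sum_(i < m) X ^+ i *+ 'C(m.+1, i.+2))).
Proof.
rewrite exprD1n !big_ord_recl /= expr0 bin0 mulr1n expr1 bin1 addrA.
rewrite -addrA -{2}[1]addr0 => /addrI /eqP; rewrite addr_eq0 => /eqP ->.
congr (- _); rewrite !mulr_sumr; apply: eq_bigr => i _.
by rewrite /bump /= !add1n !mulrnAr -!exprS.
Qed.

Lemma finite_transversal (T : finType) (M : eqType) (P : M -> Prop) (psi : M -> T) :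
  exists s : seq M, (forall x, x \in s -> P x) /\
    forall g, P g -> exists2 x, x \in s & psi x = psi g.
Proof.
suff [s [sP sT]] : exists s : seq M, (forall x, x \in s -> P x) /\
    forall g, P g -> psi g \in enum T -> exists2 x, x \in s & psi x = psi g.
  by exists s; split => // g Pg; apply: sT; rewrite ?mem_enum.
elim: (enum T) => [|t l [s [sP sT]]]; first by exists [::].
have [[g0 [Pg0 <-]]|none] := classic (exists g, P g /\ psi g = t).
  exists (g0 :: s); split=> [x|g Pg]; first by rewrite inE => /predU1P [->|/sP].
  rewrite inE => /predU1P [->|/(sT g Pg) [x xs <-]]; first by exists g0; rewrite ?inE ?eqxx.
  by exists x; rewrite // inE xs orbT.
exists s; split => // g Pg; rewrite inE => /predU1P [gt|]; last exact: sT.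
by case: none; exists g.
Qed.

Lemma strictly_upper_mx_nilpotent (R : pzRingType) n (S : 'M[R]_n.+1) :
  (forall i j : 'I_n.+1, (j <= i)%N -> S i j = 0) -> S ^+ n.+1 = 0.
Proof.
move=> S0.
have St t (i j : 'I_n.+1) : (j < i + t)%N -> (S ^+ t) i j = 0.
  elim: t i j => [|t IH] i j ji.
    by rewrite addn0 in ji; rewrite expr0 mxE (_ : (i == j) = false) // eq_sym; apply: ltn_eqF.
  rewrite exprSr -mulmxE mxE big1 // => l _.
  have [li|il] := ltnP l (i + t); first by rewrite IH ?mul0r.
  by rewrite S0 ?mulr0 // -ltnS (leq_trans ji) // addnS ltnS.
by apply/matrixP => i j; rewrite mxE St // ltn_addl.
Qed.

Lemma expr_conj (R : unitRingType) (P A : R) t : P \is a GRing.unit ->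
  (P * A * P^-1) ^+ t = P * A ^+ t * P^-1.
Proof.
move=> Pu; elim: t => [|t IH]; first by rewrite !expr0 mulr1 mulrV.
by rewrite exprSr IH -!mulrA mulKr // exprSr -mulrA.
Qed.

Lemma upper_unitriangular_nilpotent (F : fieldType) n (U : 'M[F]_n.+1) :
  upper_unitriangular U -> (U - 1) ^+ n.+1 = 0.
Proof.
move=> Uut; apply: strictly_upper_mx_nilpotent => i j ji; rewrite !mxE.
have [Ulow Udiag] := Uut i j.
have [lt_ji|le_ij] := ltnP j i.
  by rewrite Ulow // (_ : (i == j) = false) ?subrr //; apply: gtn_eqF.
have ij : i = j by apply/val_inj/eqP; rewrite eqn_leq le_ij ji.
by rewrite Udiag // ij eqxx subrr.
Qed.

Lemma unitriangular_conj_nilpotent (k K : fieldType) (f : {rmorphism k -> K}) n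
    (P : 'M[K]_n.+1) (g : 'M[k]_n.+1) :
  P \in unitmx -> upper_unitriangular (P *m map_mx f g *m invmx P) ->
  (g - 1) ^+ n.+1 = 0.
Proof.
move=> Pu /upper_unitriangular_nilpotent.
have -> : P *m map_mx f g *m invmx P - 1 = P * map_mx f (g - 1) * P^-1.
  by rewrite map_mxB map_mx1 mulrBr mulrBl mulr1 mulrV.
rewrite expr_conj // -rmorphXn /= => /(congr1 (fun X => P^-1 * X * P)).
rewrite mulr0 mul0r !mulrA mulVr // mul1r -mulrA mulVr // mulr1.
by move=> fX0; apply: (@map_mx_inj _ _ f); rewrite fX0 map_mx0.
Qed.

Lemma mxpowE (F : fieldType) n (g : 'M[F]_n.+1) m : mxpow g m = g ^+ m.
Proof. by elim: m => //= m ->; rewrite exprS mulmxE. Qed.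

Lemma finite_index_refl (F : fieldType) n (G : 'M[F]_n -> Prop) :
  GL_subgroup G -> finite_index G G.
Proof.
case=> G1 _ _ _; exists [:: 1%:M]; split=> [x|g Gg]; first by rewrite inE => /eqP ->.
by exists 1%:M; rewrite ?inE // invmx1 mul1mx.
Qed.

Lemma torsion_free_mx0 (F : fieldType) (G : 'M[F]_0 -> Prop) : torsion_free G.
Proof. by move=> g m _ _ _; rewrite [g]flatmx0 [1%:M]flatmx0. Qed.

Section RationalCoordinates.
Variables (k : fieldType) (C : numFieldType) (f : {rmorphism k -> C}).

Lemma ratrD (a b : rat) : ratr (a + b) = ratr a + ratr b :> k.
Proof. by apply: (fmorph_inj f); rewrite rmorphD /= !fmorph_rat rmorphD. Qed.

Lemma ratrM (a b : rat) : ratr (a * b) = ratr a * ratr b :> k.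
Proof. by apply: (fmorph_inj f); rewrite [RHS]rmorphM /= !fmorph_rat rmorphM. Qed.

Lemma ratrN (a : rat) : ratr (- a) = - ratr a :> k.
Proof. by apply: (fmorph_inj f); rewrite [RHS]rmorphN /= !fmorph_rat rmorphN. Qed.

Lemma ratrV (a : rat) : ratr a^-1 = (ratr a)^-1 :> k.
Proof. by apply: (fmorph_inj f); rewrite fmorphV /= !fmorph_rat fmorphV. Qed.

Lemma ratr0 : ratr 0 = 0 :> k.
Proof. exact: ratr_int k 0. Qed.

Lemma natr_char0_neq0 (m : nat) : (0 < m)%N -> (m%:R : k) != 0.
Proof. by move=> m0; rewrite -(fmorph_eq0 f) rmorph_nat pnatr_eq0 -lt0n. Qed.

Definition rat_spanning d (b : 'I_d -> k) :=
  forall x : k, exists c : 'I_d -> rat, x = \sum_(i < d) ratr (c i) * b i.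

Definition rat_free d (b : 'I_d -> k) :=
  forall c : 'I_d -> rat, \sum_(i < d) ratr (c i) * b i = 0 -> forall i, c i = 0.

Lemma rat_spanning_basis d (b : 'I_d -> k) : rat_spanning b ->
  exists d' (b' : 'I_d' -> k), rat_spanning b' /\ rat_free b'.
Proof.
elim: d b => [|d IH] b span; first by exists 0%N, b; split => // c _ [].
have [free|dep] := classic (rat_free b); first by exists d.+1, b.
have [c nfree] := not_all_ex_not _ _ dep.
have [crel nz] := imply_to_and _ _ nfree.
have [i0 ci0] := not_all_ex_not _ _ nz.
apply: (IH (fun j => b (lift i0 j))) => x; have [e ->] := span x.
exists (fun j => e (lift i0 j) - e i0 * c (lift i0 j) / c i0).
have ci0k : ratr (c i0) != 0 :> k by rewrite -(fmorph_eq0 f) fmorph_rat fmorph_eq0; apply/eqP.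
rewrite (bigD1_ord i0) //= in crel; rewrite (bigD1_ord i0) //=.
have -> : b i0 = - (ratr (c i0))^-1 * \sum_(j < d) ratr (c (lift i0 j)) * b (lift i0 j).
  apply: (mulfI ci0k); rewrite mulrA mulrN mulfV // mulN1r.
  by apply/eqP; rewrite -addr_eq0 crel.
under [in RHS]eq_bigr => j _ do rewrite ratrD ratrN !ratrM ratrV mulrBl.
rewrite sumrB addrC mulNr mulrN mulrA mulr_sumr; congr (_ - _).
by apply: eq_bigr => j _; rewrite mulrA [_ / _ * _]mulrAC.
Qed.

Variables (d : nat) (b : 'I_d -> k).
Hypotheses (b_span : rat_spanning b) (b_free : rat_free b).

Definition qcoord (x : k) : 'I_d -> rat :=
  proj1_sig (constructive_indefinite_description _ (b_span x)).

Lemma qcoordE x : x = \sum_(i < d) ratr (qcoord x i) * b i.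
Proof. by rewrite /qcoord; case: constructive_indefinite_description. Qed.

Lemma qcoord_uniq x c : x = \sum_(i < d) ratr (c i) * b i -> forall i, qcoord x i = c i.
Proof.
move=> xc i; apply/eqP; rewrite -subr_eq0; apply/eqP; move: i; apply: b_free.
under eq_bigr => i _ do rewrite ratrD ratrN mulrBl.
by rewrite sumrB -qcoordE -xc subrr.
Qed.

Lemma qcoordD x y i : qcoord (x + y) i = qcoord x i + qcoord y i.
Proof.
apply: (qcoord_uniq (c := fun j => qcoord x j + qcoord y j)).
under eq_bigr => j _ do rewrite ratrD mulrDl.
by rewrite big_split -!qcoordE.
Qed.

Lemma qcoord0 i : qcoord 0 i = 0.
Proof.
by apply: (qcoord_uniq (c := fun => 0)); rewrite big1 // => j _; rewrite ratr0 mul0r.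
Qed.

Lemma qcoordZ a x i : qcoord (ratr a * x) i = a * qcoord x i.
Proof.
apply: (qcoord_uniq (c := fun j => a * qcoord x j)).
under eq_bigr => j _ do rewrite ratrM -mulrA.
by rewrite -mulr_sumr -qcoordE.
Qed.

Lemma qcoordN x i : qcoord (- x) i = - qcoord x i.
Proof.
have -> : - x = ratr (-1) * x by rewrite ratrN (ratr_nat k 1) mulN1r.
by rewrite qcoordZ mulN1r.
Qed.

Lemma qcoordB x y i : qcoord (x - y) i = qcoord x i - qcoord y i.
Proof. by rewrite qcoordD qcoordN. Qed.

Lemma qcoordMn x m i : qcoord (x *+ m) i = qcoord x i *+ m.
Proof. by rewrite -mulr_natl -(ratr_nat k) qcoordZ mulr_natl. Qed.

Lemma qcoord_sum (I : Type) (r : seq I) (P : pred I) (F : I -> k) i :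
  qcoord (\sum_(j <- r | P j) F j) i = \sum_(j <- r | P j) qcoord (F j) i.
Proof. exact: (big_morph (qcoord^~ i) (fun x y => qcoordD x y i) (qcoord0 i)). Qed.

Lemma qcoordM x y l : qcoord (x * y) l =
  \sum_(i < d) \sum_(j < d) qcoord x i * qcoord y j * qcoord (b i * b j) l.
Proof.
rewrite {1}[x]qcoordE {1}[y]qcoordE mulr_suml qcoord_sum; apply: eq_bigr => i _.
rewrite mulr_sumr qcoord_sum; apply: eq_bigr => j _.
by rewrite mulrACA -ratrM qcoordZ.
Qed.

Lemma qcoord_eq0 x : (forall i, qcoord x i = 0) -> x = 0.
Proof. by move=> x0; rewrite [x]qcoordE big1 // => i _; rewrite x0 ratr0 mul0r. Qed.

(* When this holds, the Z_(p)-span of [b] is a subring of [k]; congruences mod p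
   are taken in it. *)
Definition basis_integral p :=
  (forall i j l, p_integral p (qcoord (b i * b j) l)) /\
  (forall l, p_integral p (qcoord 1 l)).

Section Congruences.
Variable p : nat.
Hypotheses (p_pr : prime p) (b_int : basis_integral p).

Definition pdvd t x := forall l, p_integral p (qcoord x l / (p ^ t)%:R).

Lemma pdvd0E x : pdvd 0 x <-> forall l, p_integral p (qcoord x l).
Proof. by rewrite /pdvd expn0 mulr1n; split=> H l; have := H l; rewrite divr1. Qed.

Lemma pdvd0 t : pdvd t 0.
Proof. by move=> l; rewrite qcoord0 mul0r; apply: (p_integral0 p_pr). Qed.

Lemma pdvdD t x y : pdvd t x -> pdvd t y -> pdvd t (x + y).
Proof. by move=> Hx Hy l; rewrite qcoordD mulrDl; apply: (p_integralD p_pr). Qed.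

Lemma pdvdN t x : pdvd t x -> pdvd t (- x).
Proof. by move=> Hx l; rewrite qcoordN mulNr; apply: (p_integralN p_pr). Qed.

Lemma pdvd_sum t (I : Type) (r : seq I) (P : pred I) (F : I -> k) :
  (forall i, P i -> pdvd t (F i)) -> pdvd t (\sum_(i <- r | P i) F i).
Proof. by move=> HF; apply: big_ind => //; [exact: pdvd0 | exact: pdvdD]. Qed.

Lemma pdvdM s t x y : pdvd s x -> pdvd t y -> pdvd (s + t) (x * y).
Proof.
move=> Hx Hy l; rewrite qcoordM mulr_suml; apply: (p_integral_sum p_pr) => i _.
rewrite mulr_suml; apply: (p_integral_sum p_pr) => j _.
rewrite expnD natrM invfM mulrAC mulrACA.
by apply: (p_integralM p_pr); [apply: (p_integralM p_pr)|apply: b_int.1].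
Qed.

Lemma pdvd_ratrM t a x : p_integral p a -> pdvd t x -> pdvd t (ratr a * x).
Proof. by move=> Ha Hx l; rewrite qcoordZ -mulrA; apply: (p_integralM p_pr). Qed.

Lemma pdvd_nat m : pdvd 0 m%:R.
Proof.
apply/pdvd0E => l; rewrite qcoordMn -mulr_natr.
by apply: (p_integralM p_pr); [apply: b_int.2|apply: (p_integral_nat p_pr)].
Qed.

Lemma pdvd_mulpr x : pdvd 0 x -> pdvd 1 (x *+ p).
Proof.
by move=> /pdvd0E Hx l; rewrite qcoordMn expn1 -[_ *+ p]mulr_natr mulfK ?prime_natr_neq0.
Qed.

Lemma pdvdS t x : pdvd t.+1 x -> pdvd t x.
Proof.
move=> Hx l; have := p_integralM p_pr (Hx l) (p_integral_nat p_pr p).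
have pt0 : ((p ^ t)%:R : rat) != 0 by rewrite natrX expf_neq0 ?prime_natr_neq0.
by rewrite expnS natrM invfM mulrAC -mulrA mulVKf ?prime_natr_neq0.
Qed.

Lemma pdvd_all_eq0 x : (forall t, pdvd t x) -> x = 0.
Proof.
by move=> Hx; apply: qcoord_eq0 => l; apply: (p_integral_div_pexp_eq0 p_pr) => t; apply: Hx.
Qed.

Definition mx_pdvd t n (A : 'M[k]_n) := forall i j, pdvd t (A i j).

Definition mx_cong n (A B : 'M[k]_n) := mx_pdvd 1 (A - B).

Section Matrices.
Variable n : nat.
Implicit Types A B : 'M[k]_n.

Lemma mx_pdvd0 t : mx_pdvd t (0 : 'M[k]_n).
Proof. by move=> i j; rewrite mxE; apply: pdvd0. Qed.

Lemma mx_pdvdD t A B : mx_pdvd t A -> mx_pdvd t B -> mx_pdvd t (A + B).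
Proof. by move=> HA HB i j; rewrite mxE; apply: pdvdD. Qed.

Lemma mx_pdvdN t A : mx_pdvd t A -> mx_pdvd t (- A).
Proof. by move=> HA i j; rewrite mxE; apply: pdvdN. Qed.

Lemma mx_pdvdB t A B : mx_pdvd t A -> mx_pdvd t B -> mx_pdvd t (A - B).
Proof. by move=> HA HB; apply: mx_pdvdD => //; apply: mx_pdvdN. Qed.

Lemma mx_pdvd_sum t (I : Type) (r : seq I) (P : pred I) (F : I -> 'M[k]_n) :
  (forall i, P i -> mx_pdvd t (F i)) -> mx_pdvd t (\sum_(i <- r | P i) F i).
Proof. by move=> HF; apply: big_ind => //; [exact: mx_pdvd0 | exact: mx_pdvdD]. Qed.

Lemma mx_pdvdM s t A B : mx_pdvd s A -> mx_pdvd t B -> mx_pdvd (s + t) (A *m B).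
Proof. by move=> HA HB i j; rewrite mxE; apply: pdvd_sum => l _; apply: pdvdM. Qed.

Lemma mx_pdvdS t A : mx_pdvd t.+1 A -> mx_pdvd t A.
Proof. by move=> HA i j; apply: pdvdS. Qed.

Lemma mx_pdvd1 : mx_pdvd 0 (1%:M : 'M[k]_n).
Proof. by move=> i j; rewrite mxE; apply: pdvd_nat. Qed.

Lemma mx_pdvdMn t A m : mx_pdvd t A -> mx_pdvd t (A *+ m).
Proof.
by move=> HA i j; rewrite mulmxnE -mulr_natl -[t]add0n; apply: pdvdM (pdvd_nat m) _.
Qed.

Lemma mx_pdvd_mulpr A : mx_pdvd 0 A -> mx_pdvd 1 (A *+ p).
Proof. by move=> HA i j; rewrite mulmxnE; apply: pdvd_mulpr. Qed.

Lemma mx_pdvd_ratrZ t a A : p_integral p a -> mx_pdvd t A -> mx_pdvd t (ratr a *: A).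
Proof. by move=> Ha HA i j; rewrite mxE; apply: pdvd_ratrM. Qed.

Lemma mx_cong_refl A : mx_cong A A.
Proof. by rewrite /mx_cong subrr; apply: mx_pdvd0. Qed.

Lemma mx_cong_trans A B D : mx_cong A B -> mx_cong B D -> mx_cong A D.
Proof. by move=> AB BD; rewrite /mx_cong -(subrKA B); apply: mx_pdvdD. Qed.

Lemma mx_cong_integral A B : mx_pdvd 0 B -> mx_cong A B -> mx_pdvd 0 A.
Proof. by move=> HB /mx_pdvdS AB; rewrite -(subrK B A); apply: mx_pdvdD. Qed.

Lemma mx_congM A B A' B' : mx_pdvd 0 B -> mx_pdvd 0 A' ->
  mx_cong A A' -> mx_cong B B' -> mx_cong (A *m B) (A' *m B').
Proof.
rewrite /mx_cong => HB HA' AA' BB'.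
have -> : A *m B - A' *m B' = (A - A') *m B + A' *m (B - B').
  by rewrite mulmxBl mulmxBr addrA subrK.
by apply: mx_pdvdD; [rewrite -[1%N]addn0|rewrite -[1%N]add0n]; apply: mx_pdvdM.
Qed.

Lemma mx_congV A B : A \in unitmx -> B \in unitmx ->
  mx_pdvd 0 (invmx A) -> mx_pdvd 0 (invmx B) -> mx_cong A B -> mx_cong (invmx A) (invmx B).
Proof.
rewrite /mx_cong => Au Bu HA HB AB.
have -> : invmx A - invmx B = invmx A *m (- (A - B)) *m invmx B.
  by rewrite opprB mulmxBr mulmxBl mulmxK // mulVmx // mul1mx.
rewrite -[1%N]addn0 -[1%N]add0n.
by apply: mx_pdvdM => //; apply: mx_pdvdM => //; apply: mx_pdvdN.
Qed.

Definition mx_mod A : {ffun 'I_n * 'I_n * 'I_d -> 'F_p} :=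
  [ffun t => rat_mod p (qcoord (A t.1.1 t.1.2) t.2)].

Lemma mx_mod_eq_cong A B : mx_pdvd 0 A -> mx_pdvd 0 B ->
  mx_mod A = mx_mod B -> mx_cong A B.
Proof.
move=> HA HB AB i j l; rewrite !mxE qcoordB expn1.
have /pdvd0E HAij := HA i j; have /pdvd0E HBij := HB i j.
apply: (rat_mod_eq_p_integral_div p_pr) => //.
by have := congr1 (fun F : {ffun _ -> 'F_p} => F (i, j, l)) AB; rewrite !ffunE.
Qed.

End Matrices.

Arguments mx_pdvd0 {n}.
Arguments mx_pdvd1 {n}.

Definition mx_integral_unit n (A : 'M[k]_n) :=
  [/\ A \in unitmx, mx_pdvd 0 A & mx_pdvd 0 (invmx A)].

Section SquareMatrices.
Variable n : nat.
Implicit Types A B X V c g h : 'M[k]_n.+1.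

Lemma mx_integral_unit_subgroup : GL_subgroup (@mx_integral_unit n.+1).
Proof.
split.
- by split; rewrite ?invmx1 ?unitmx1 //; apply: mx_pdvd1.
- by move=> g [].
- move=> g h [gu g0 gV0] [hu h0 hV0]; split; first by rewrite unitmx_mul gu.
    exact: mx_pdvdM g0 h0.
  by rewrite [invmx _](invrM gu hu); apply: mx_pdvdM hV0 gV0.
- by move=> g [gu g0 gV0]; split; rewrite ?invmxK ?unitmx_inv.
Qed.

Lemma generated_mx_integral_unit (s : seq 'M[k]_n.+1) g :
  all (fun x => x \in unitmx) s ->
  (forall x, x \in s -> mx_pdvd 0 x /\ mx_pdvd 0 (invmx x)) ->
  GL_generated s g -> mx_integral_unit g.
Proof.
move=> s_unit s_int /(_ _ mx_integral_unit_subgroup); apply=> x xs.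
by have [x0 xV0] := s_int x xs; split=> //; apply: (allP s_unit).
Qed.

Lemma mx_pdvdX t e X : mx_pdvd t X -> mx_pdvd (t * e) (X ^+ e).
Proof.
move=> HX; elim: e => [|e IH]; first by rewrite muln0 expr0; apply: mx_pdvd1.
by rewrite exprSr mulnS addnC; apply: mx_pdvdM.
Qed.

Lemma mx_congX A B t : mx_pdvd 0 A -> mx_pdvd 0 B -> mx_cong A B ->
  mx_cong (A ^+ t) (B ^+ t).
Proof.
move=> HA HB AB; elim: t => [|t IH]; first exact: mx_cong_refl.
by rewrite !exprSr; apply: mx_congM => //; apply: (mx_pdvdX t HB).
Qed.

Lemma unipotent_pexp_cong1 c : mx_pdvd 0 c -> (c - 1) ^+ n.+1 = 0 ->
  mx_cong (c ^+ (p ^ n.+1)) 1.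
Proof.
move=> c0; rewrite -{2}(subrK 1 c); set X := c - 1 => Xn.
have X0 : mx_pdvd 0 X := mx_pdvdB c0 mx_pdvd1.
have n_lt_pn : (n.+1 < p ^ n.+1)%N by rewrite ltn_expl ?prime_gt1.
rewrite /mx_cong exprD1n big_ord_recl expr0 bin0 mulr1n addrAC subrr add0r.
apply: mx_pdvd_sum => i _; rewrite lift0.
have [i_lt|pn_le] := ltnP i.+1 (p ^ n.+1).
  have /dvdnP [e ->] : (p %| 'C(p ^ n.+1, i.+1))%N by apply: prime_dvdn_bin_pexp.
  by rewrite mulrnA; apply/mx_pdvd_mulpr/mx_pdvdMn; apply: (mx_pdvdX i.+1 X0).
by rewrite -(subnKC (leq_trans (ltnW n_lt_pn) pn_le)) exprD Xn mul0r mul0rn; apply: mx_pdvd0.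
Qed.

Lemma mx_pdvd_mulr_fixed_eq0 X V : mx_pdvd 0 X -> mx_pdvd 1 V -> X = X * V -> X = 0.
Proof.
move=> X0 V1 XV.
have XVt t : X = X * V ^+ t.
  by elim: t => [|t IH]; rewrite ?expr0 ?mulr1 // exprSr mulrA -IH -XV.
apply/matrixP => i j; rewrite mxE; apply: pdvd_all_eq0 => t.
by rewrite (XVt t); have := mx_pdvdM X0 (mx_pdvdX t V1); rewrite mul1n; apply.
Qed.

Lemma cong1_torsion_coprime h m : mx_cong h 1 -> h ^+ m = 1 -> ~~ (p %| m)%N -> h = 1.
Proof.
move=> h1 hm pm; case: m => [|m] in hm pm; first by rewrite dvdn0 in pm.
have X0 := mx_pdvdS h1; apply/eqP; rewrite -subr_eq0; apply/eqP.
have := @binomial_expr_eq1 _ (h - 1) m; rewrite subrK => /(_ hm).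
set T := \sum_(i < m) _ => mX.
have T0 : mx_pdvd 0 T.
  by apply: mx_pdvd_sum => i _; apply: mx_pdvdMn; apply: (mx_pdvdX i X0).
pose a : rat := (m.+1%:R)^-1.
have a_int : p_integral p a by apply: p_integral_invn.
(* m.+1 X = - X^2 T, so X = X V with V := - X T / m.+1 = 0 (mod p). *)
apply: (mx_pdvd_mulr_fixed_eq0 X0 (V := - (ratr a *: ((h - 1) * T)))).
  by apply/mx_pdvdN/mx_pdvd_ratrZ => //; apply: (mx_pdvdM h1 T0).
rewrite mulrN -scalerAr -scalerN -mX -scaler_nat scalerA ratrV (ratr_nat k).
by rewrite mulVf ?scale1r // natr_char0_neq0.
Qed.

Lemma cong1_torsion_pexp h m : mx_cong h 1 -> h ^+ m = 1 -> (0 < m)%N ->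
  exists a, h ^+ (p ^ a) = 1.
Proof.
move=> h1 hm m0; have [m' pm' Em] := pfactor_coprime p_pr m0.
have h0 := mx_cong_integral mx_pdvd1 h1.
exists (logn p m); apply: (cong1_torsion_coprime (m := m')).
- by have := mx_congX (p ^ logn p m) h0 mx_pdvd1 h1; rewrite expr1n.
- by rewrite -exprM mulnC -Em hm.
- by rewrite -prime_coprime // coprime_sym.
Qed.

Lemma torsion_cong_unipotent_pexp g c m : mx_pdvd 0 c -> mx_cong g c ->
  (c - 1) ^+ n.+1 = 0 -> g ^+ m = 1 -> (0 < m)%N -> exists a, g ^+ (p ^ a) = 1.
Proof.
move=> c0 gc cn gm m0; have g0 := mx_cong_integral c0 gc.
have g1 : mx_cong (g ^+ (p ^ n.+1)) 1.
  exact: mx_cong_trans (mx_congX _ g0 c0 gc) (unipotent_pexp_cong1 c0 cn).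
have gpm : (g ^+ (p ^ n.+1)) ^+ m = 1 by rewrite -exprM mulnC exprM gm expr1n.
have [a ga] := cong1_torsion_pexp g1 gpm m0.
by exists (n.+1 + a)%N; rewrite expnD exprM.
Qed.
End SquareMatrices.
End Congruences.

Lemma large_primes_integral (T : eqType) (s : seq T) (I : finType) (F : T -> I -> rat) :
  exists D, forall p, (D < p)%N -> forall x, x \in s -> forall i, p_integral p (F x i).
Proof.
exists (\max_(x <- s) \max_i `|denq (F x i)|)%N => p Dp x xs i.
apply/p_integral_small_den/(leq_ltn_trans _ Dp)/(leq_trans _ (leq_bigmax_seq _ xs isT)).
exact: (leq_bigmax (F := fun i => `|denq (F x i)|%N)).
Qed.

Lemma large_primes_good n (s : seq 'M[k]_n) : exists D, forall p, (D < p)%N ->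
  basis_integral p /\ forall x, x \in s -> mx_pdvd p 0 x /\ mx_pdvd p 0 (invmx x).
Proof.
have [D1 HD1] := large_primes_integral [:: tt]
  (fun _ (t : 'I_d * 'I_d * 'I_d) => qcoord (b t.1.1 * b t.1.2) t.2).
have [D2 HD2] := large_primes_integral [:: tt] (fun _ l => qcoord 1 l).
have [D3 HD3] := large_primes_integral s
  (fun x (t : 'I_n * 'I_n * 'I_d) => qcoord (x t.1.1 t.1.2) t.2).
have [D4 HD4] := large_primes_integral s
  (fun x (t : 'I_n * 'I_n * 'I_d) => qcoord (invmx x t.1.1 t.1.2) t.2).
exists (D1 + D2 + D3 + D4)%N => p Dp; split; first split.
- by move=> i j l; apply: (HD1 p _ tt _ (i, j, l)) => //; lia.
- by move=> l; apply: (HD2 p _ tt _ l) => //; lia.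
- by move=> x xs; split=> i j; apply/pdvd0E => l;
    [apply: (HD3 p _ x xs (i, j, l)) | apply: (HD4 p _ x xs (i, j, l))]; lia.
Qed.

Section CongruenceSubgroup.
Variables (n p q : nat) (Lambda Gamma : 'M[k]_n.+1 -> Prop).
Hypotheses (p_pr : prime p) (q_pr : prime q) (pq : p != q).
Hypotheses (bp : basis_integral p) (bq : basis_integral q).
Hypotheses (Lambda_grp : GL_subgroup Lambda) (Gamma_grp : GL_subgroup Gamma).
Hypothesis Gamma_sub : GL_subset Gamma Lambda.
Hypothesis Lambda_integral :
  forall g, Lambda g -> mx_integral_unit p g /\ mx_integral_unit q g.
Hypothesis Gamma_unipotent : forall c, Gamma c -> (c - 1) ^+ n.+1 = 0.

Definition cong_subgroup g :=
  Lambda g /\ exists2 c, Gamma c & mx_cong p g c /\ mx_cong q g c.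

Lemma cong_subgroup_GL_subgroup : GL_subgroup cong_subgroup.
Proof.
have [L1 Lu LM LV] := Lambda_grp; have [G1 _ GM GV] := Gamma_grp.
split.
- by split=> //; exists 1%:M => //; split; apply: mx_cong_refl.
- by move=> g [/Lu].
- move=> g h [Lg [c Gc [gcp gcq]]] [Lh [c' Gc' [hcp hcq]]]; split; first exact: LM.
  have [[_ hp _] [_ hq _]] := Lambda_integral Lh.
  have [[_ cp _] [_ cq _]] := Lambda_integral (Gamma_sub Gc).
  exists (c *m c'); first exact: GM.
  by split; [apply: (mx_congM p_pr bp) | apply: (mx_congM q_pr bq)].
- move=> g [Lg [c Gc [gcp gcq]]]; split; first exact: LV.
  have [[gu _ gp] [_ _ gq]] := Lambda_integral Lg.
  have [[cu _ cp] [_ _ cq]] := Lambda_integral (Gamma_sub Gc).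
  exists (invmx c); first exact: GV.
  by split; [apply: (mx_congV p_pr bp) | apply: (mx_congV q_pr bq)].
Qed.

Lemma cong_subgroup_torsion_free : torsion_free cong_subgroup.
Proof.
move=> g m [Lg [c Gc [gcp gcq]]] m0; rewrite mxpowE => gm.
have [[_ cp _] [_ cq _]] := Lambda_integral (Gamma_sub Gc).
have [a ga] := torsion_cong_unipotent_pexp p_pr bp cp gcp (Gamma_unipotent Gc) gm m0.
have [e ge] := torsion_cong_unipotent_pexp q_pr bq cq gcq (Gamma_unipotent Gc) gm m0.
apply: (expr_coprime_eq1 _ ga ge).
by rewrite coprimeXl // coprimeXr // prime_coprime // dvdn_prime2.
Qed.

Lemma cong_subgroup_finite_index : finite_index cong_subgroup Lambda.
Proof.
have [_ Lu LM LV] := Lambda_grp.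
have [s [sL s_rep]] := finite_transversal Lambda (fun g => (mx_mod p g, mx_mod q g)).
exists s; split=> // g Lg; have [x xs [= xgp xgq]] := s_rep g Lg.
exists x => //; have Lx := sL x xs; split; first by apply: LM => //; apply: LV.
have [[xu xp xVp] [_ xq xVq]] := Lambda_integral Lx.
have [[_ gp _] [_ gq _]] := Lambda_integral Lg.
exists 1%:M; first by case: Gamma_grp.
rewrite -(mulVmx xu); split.
- apply: (mx_congM p_pr bp) => //; first exact: mx_cong_refl.
  exact: (mx_mod_eq_cong p_pr) (esym xgp).
- apply: (mx_congM q_pr bq) => //; first exact: mx_cong_refl.
  exact: (mx_mod_eq_cong q_pr) (esym xgq).
Qed.

Lemma Gamma_sub_cong_subgroup : GL_subset Gamma cong_subgroup.
Proof.
by move=> c Gc; split; [apply: Gamma_sub | exists c => //; split; apply: mx_cong_refl].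
Qed.

End CongruenceSubgroup.
End RationalCoordinates.

Unset Implicit Arguments.

Theorem mainTheorem18 (R : realType) (k : fieldType)
  (f : {rmorphism k -> R[i]}) (n : nat)
  (Lambda Gamma : 'M[k]_n -> Prop) :
  finite_over_Q k ->
  GL_fingen Lambda ->
  GL_subgroup Gamma ->
  GL_subset Gamma Lambda ->
  unipotent_subgroup f Gamma ->
  exists Lambda0 : 'M[k]_n -> Prop,
    [/\ GL_subgroup Lambda0, GL_subset Lambda0 Lambda,
        torsion_free Lambda0, finite_index Lambda0 Lambda &
        GL_subset Gamma Lambda0].
Proof.
case: n => [|n] in Lambda Gamma *.
  move=> _ [L_grp _] _ GL _; exists Lambda.
  by split=> //; [apply: torsion_free_mx0 | apply: finite_index_refl].
move=> [d0 [b0 b0_span]] [L_grp [s [s_unit L_gen]]] G_grp GL [P [Pu P_unitri]].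
have [d [b [b_span b_free]]] := rat_spanning_basis f b0_span.
have [D D_good] := large_primes_good b_span s.
have [p Dp p_pr] := prime_above D; have [q pq q_pr] := prime_above p.
have [bp sp] := D_good p Dp; have [bq sq] := D_good q (ltn_trans Dp pq).
have L_int g : Lambda g -> mx_integral_unit b_span p g /\ mx_integral_unit b_span q g.
  move=> /L_gen Lg; split.
    exact: (generated_mx_integral_unit f b_free p_pr bp s_unit sp Lg).
  exact: (generated_mx_integral_unit f b_free q_pr bq s_unit sq Lg).
have G_unip c : Gamma c -> (c - 1) ^+ n.+1 = 0.
  by move=> Gc; apply: unitriangular_conj_nilpotent Pu (P_unitri c Gc).
have p_neq_q : p != q by rewrite neq_ltn pq.
exists (cong_subgroup b_span p q Lambda Gamma); split.
- exact (cong_subgroup_GL_subgroup f b_free p_pr q_pr bp bq L_grp G_grp GL L_int).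
- by move=> g [].
- exact (cong_subgroup_torsion_free f b_free p_pr q_pr p_neq_q bp bq GL L_int G_unip).
- exact (cong_subgroup_finite_index f b_free p_pr q_pr bp bq L_grp G_grp L_int).
- exact (Gamma_sub_cong_subgroup f b_span b_free p_pr q_pr GL).
Qed.
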